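(* Let $(X,r)$ be a finite simple solution of the YBE such that $|X|$ is not prime, and let $\mathcal G=\mathcal G(X,r)$ with its natural left brace structure. Let $I$ be a minimal nonzero ideal of the left brace $\mathcal G$. Then $\mathcal G/I$ is a trivial left brace whose additive group is cyclic, and $$I=\mathcal G^2=\langle \sigma_x-\sigma_y \mid x,y\in X\rangle_+ .$$ Moreover $\mathrm{soc}(\mathcal G)=\{0\}$.
   Context: A solution of the YBE is a pair $(X,r)$, $X$ nonempty, $r:X\times X\to X\times X$, $r(x,y)=(\sigma_x(y),\gamma_y(x))$, with $r^2=\mathrm{id}$, all $\sigma_x,\gamma_x$ bijective, and $r_{12}r_{23}r_{12}=r_{23}r_{12}r_{23}$ on $X^3$ ($r_{12}=r\times \mathrm{id}$, $r_{23}=\mathrm{id}\times r$). $\mathcal G(X,r)=\langle\sigma_x:x\in X\rangle\le\mathrm{Sym}_X$. Homomorphisms of solutions are maps $f$ with $f(\sigma_x(y))=\sigma'_{f(x)}(f(y))$; $(X,r)$ is simple if $|X|>1$ and every surjective homomorphism of solutions from $(X,r)$ is bijective or has one-point image. A left brace is a set $B$ with operations $+$ and $\circ$ (written $ab=a\circ b$) such that $(B,+)$ is an abelian group, $(B,\circ)$ is a group and $a(b+c)+a=ab+ac$ for all $a,b,c$; the neutral elements coincide (denoted $0$). Its lambda map is $\lambda_a(b)=-a+ab$, giving a homomorphism $(B,\circ)\to\mathrm{Aut}(B,+)$. $B$ is trivial if $ab=a+b$ for all $a,b$. $\mathrm{soc}(B)=\{a: ab=a+b\ \forall b\}$. An ideal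 is a normal subgroup $I$ of $(B,\circ)$ with $\lambda_a(I)\subseteq I$ for all $a$; then $B/I$ is a left brace. $a*b=\lambda_a(b)-b$ and $B^2$ is the additive subgroup generated by all $a*b$. The structure group $G(X,r)$ (generators $X$, relations $xy=\sigma_x(y)\gamma_y(x)$) has a left brace structure with additive group free abelian on $X$ and $\lambda_x(y)=\sigma_x(y)$; the map $x\mapsto\sigma_x$ extends to a surjective group homomorphism $\phi:G(X,r)\to\mathcal G(X,r)$ with kernel $\mathrm{soc}(G(X,r))$, and the natural left brace structure on $\mathcal G(X,r)$ is the unique one making $\phi$ a homomorphism of left braces. *)

From HB Require Import structures.
From mathcomp Require Import all_boot all_fingroup.

Set Implicit Arguments.
Unset Strict Implicit.
Unset Printing Implicit Defensive.

(* r(x,y) = (sigma_x(y), gamma_y(x)) *)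
Definition ybe_r (X : Type) (s g : X -> X -> X) (p : X * X) : X * X :=
  (s p.1 p.2, g p.2 p.1).

Definition ybe_r12 (X : Type) (r : X * X -> X * X) (t : X * X * X) : X * X * X :=
  let p := r (t.1.1, t.1.2) in (p.1, p.2, t.2).

Definition ybe_r23 (X : Type) (r : X * X -> X * X) (t : X * X * X) : X * X * X :=
  let p := r (t.1.2, t.2) in (t.1.1, p.1, p.2).

Definition is_solution (X : Type) (s g : X -> X -> X) : Prop :=
  inhabited X /\
  (forall x, bijective (s x)) /\ (forall x, bijective (g x)) /\
  (forall p, ybe_r s g (ybe_r s g p) = p) /\
  (forall t, ybe_r12 (ybe_r s g) (ybe_r23 (ybe_r s g) (ybe_r12 (ybe_r s g) t))
           = ybe_r23 (ybe_r s g) (ybe_r12 (ybe_r s g) (ybe_r23 (ybe_r s g) t))).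

Definition sol_hom (X Y : Type) (sX : X -> X -> X) (sY : Y -> Y -> Y) (f : X -> Y) :=
  forall x y, f (sX x y) = sY (f x) (f y).

Definition simple_solution (X : finType) (s g : X -> X -> X) : Prop :=
  is_solution s g /\ 1 < #|X| /\
  forall (Y : Type) (sY gY : Y -> Y -> Y) (f : X -> Y),
    is_solution sY gY -> sol_hom s sY f -> (forall y, exists x, f x = y) ->
    (injective f \/ (forall x y, f x = f y)).

Definition permGroup (X : finType) (s : X -> {perm X}) : {group {perm X}} :=
  <<[set s x | x : X]>>%G.

Section Braces.
Variable gT : finGroupType.

(* the brace multiplication a o b is composition "apply b then a"; in
   MathComp, (p * q) x = q (p x) for permutations, hence the swap. *)
Definition bcomp (a b : gT) : gT := (b * a)%g.

Variables (add : gT -> gT -> gT) (opp : gT -> gT).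

Definition left_brace_on (G : {set gT}) : Prop :=
  {in G &, forall a b, add a b \in G} /\
  {in G, forall a, opp a \in G} /\
  {in G & &, forall a b c, add a (add b c) = add (add a b) c} /\
  {in G &, forall a b, add a b = add b a} /\
  {in G, forall a, add 1%g a = a} /\
  {in G, forall a, add (opp a) a = 1%g} /\
  {in G & &, forall a b c, add (bcomp a (add b c)) a = add (bcomp a b) (bcomp a c)}.

Definition blambda (a b : gT) : gT := add (opp a) (bcomp a b).

Definition bstar (a b : gT) : gT := add (blambda a b) (opp b).

Definition is_ideal (G I : {set gT}) : Prop :=
  group_set I /\ (I <| G)%g /\ {in G & I, forall a x, blambda a x \in I}.

Definition minimal_nonzero_ideal (G I : {set gT}) : Prop :=
  is_ideal G I /\ I != [1 gT]%g /\
  forall J : {set gT}, is_ideal G J -> J \subset I -> J = [1 gT]%g \/ J = I.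

Definition in_add_span (S : {set gT}) (x : gT) : Prop :=
  forall A : {set gT}, 1%g \in A -> {in A &, forall a b, add a b \in A} ->
    {in A, forall a, opp a \in A} -> S \subset A -> x \in A.

Definition bnmul (n : nat) (a : gT) : gT := iter n (add a) 1%g.

End Braces.

(* The natural left brace structure on G(X,r): the brace structure
   (G, add, o) for which lambda_{sigma_x}(sigma_y) = sigma_{sigma_x(y)},
   i.e. the one making x |-> sigma_x extend to a brace homomorphism from
   the structure group (where lambda_x(y) = sigma_x(y)). *)
Definition natural_brace (X : finType) (s : X -> {perm X})
    (add : {perm X} -> {perm X} -> {perm X}) (opp : {perm X} -> {perm X}) : Prop :=
  left_brace_on add opp (permGroup s) /\
  forall x y, blambda add opp (s x) (s y) = s (s x y).

(* Applied to the orbits of subgroups of <[p]>, this shows that a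
      simple solution with constant sigma = p has prime size.
   3. In the natural brace, lambda_a(sigma_x) = sigma_{a(x)}.  Hence the
      relation sigma_x = sigma_y mod J is a congruence of the solution for any
      ideal J; it is not equality when J is nonzero, so J contains every
      sigma_x - sigma_y, and then every a * b by the cocycle identity.
   4. For the minimal ideal I this gives all assertions; sigma is injective
      (it is not constant as |X| is not prime), which supplies the nonzero
      generators needed for the spans and forces soc(G) = 0. *)

From HB Require Import structures.
From mathcomp Require Import all_boot all_fingroup all_solvable.
From mathcomp Require Import boolp.

Set Implicit Arguments.
Unset Strict Implicit.
Unset Printing Implicit Defensive.

Open Scope group_scope.

Create HintDb brace_mem.
Ltac brace_mem :=
  match goal with |- is_true (_ \in _) => solve [auto 15 with brace_mem] end.

Section BraceAlgebra.
Variables (gT : finGroupType) (G : {group gT}).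
Variables (add : gT -> gT -> gT) (opp : gT -> gT).
Hypothesis HB : left_brace_on add opp G.

Local Notation lam := (blambda add opp).
Local Notation star := (bstar add opp).

Lemma addG a b : a \in G -> b \in G -> add a b \in G.
Proof. by case: HB => H _; apply: H. Qed.
Lemma oppG a : a \in G -> opp a \in G.
Proof. by case: HB => _ [H _]; apply: H. Qed.
Lemma addA a b c : a \in G -> b \in G -> c \in G -> add a (add b c) = add (add a b) c.
Proof. by case: HB => _ [_ [H _]]; apply: H. Qed.
Lemma addC a b : a \in G -> b \in G -> add a b = add b a.
Proof. by case: HB => _ [_ [_ [H _]]]; apply: H. Qed.
Lemma add1 a : a \in G -> add 1 a = a.
Proof. by case: HB => _ [_ [_ [_ [H _]]]]; apply: H. Qed.
Lemma addNa a : a \in G -> add (opp a) a = 1.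
Proof. by case: HB => _ [_ [_ [_ [_ [H _]]]]]; apply: H. Qed.
Lemma brace_compat a b c : a \in G -> b \in G -> c \in G ->
  add (bcomp a (add b c)) a = add (bcomp a b) (bcomp a c).
Proof. by case: HB => _ [_ [_ [_ [_ [_ H]]]]]; apply: H. Qed.

Lemma bcompG a b : a \in G -> b \in G -> bcomp a b \in G.
Proof. by move=> ha hb; rewrite /bcomp groupM. Qed.
Lemma lamG a b : a \in G -> b \in G -> lam a b \in G.
Proof. by move=> ha hb; rewrite /blambda addG ?oppG ?bcompG. Qed.
Lemma starG a b : a \in G -> b \in G -> star a b \in G.
Proof. by move=> ha hb; rewrite /bstar addG ?oppG ?lamG. Qed.

Lemma invG a : a \in G -> a^-1 \in G.
Proof. exact: groupVr. Qed.
Lemma oneG : (1 : gT) \in G.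
Proof. exact: group1. Qed.

Local Hint Resolve addG oppG bcompG lamG starG invG oneG : brace_mem.

Lemma addr1 a : a \in G -> add a 1 = a.
Proof. by move=> ha; rewrite addC ?add1 //; brace_mem. Qed.
Lemma addaN a : a \in G -> add a (opp a) = 1.
Proof. by move=> ha; rewrite addC ?addNa //; brace_mem. Qed.
Lemma addKl a b : a \in G -> b \in G -> add (opp a) (add a b) = b.
Proof. by move=> ha hb; rewrite addA ?addNa ?add1 //; brace_mem. Qed.
Lemma addNK a b : a \in G -> b \in G -> add a (add (opp a) b) = b.
Proof. by move=> ha hb; rewrite addA ?addaN ?add1 //; brace_mem. Qed.
Lemma addrK a b : a \in G -> b \in G -> add (add a b) (opp b) = a.
Proof. by move=> ha hb; rewrite -addA ?addaN ?addr1 //; brace_mem. Qed.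
Lemma addIl a b c : a \in G -> b \in G -> c \in G -> add a b = add a c -> b = c.
Proof. by move=> ha hb hc e; rewrite -(addKl ha hb) e addKl. Qed.
Lemma opp_uniq a b : a \in G -> b \in G -> add a b = 1 -> b = opp a.
Proof. by move=> ha hb e; rewrite -(addKl ha hb) e addr1 //; brace_mem. Qed.
Lemma opp1 : opp 1 = 1.
Proof. by symmetry; apply: opp_uniq; rewrite ?add1 //; brace_mem. Qed.
Lemma oppK a : a \in G -> opp (opp a) = a.
Proof. by move=> ha; symmetry; apply: opp_uniq; rewrite ?addNa //; brace_mem. Qed.
Lemma addCA a b c : a \in G -> b \in G -> c \in G -> add a (add b c) = add b (add a c).
Proof.
move=> ha hb hc; rewrite addA; try brace_mem.
by rewrite (addC ha hb) -addA.
Qed.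
Lemma addACA a b c d : a \in G -> b \in G -> c \in G -> d \in G ->
  add (add a b) (add c d) = add (add a c) (add b d).
Proof.
move=> ha hb hc hd; rewrite -addA; try brace_mem.
by rewrite (addCA hb hc hd) addA //; brace_mem.
Qed.
Lemma oppD a b : a \in G -> b \in G -> opp (add a b) = add (opp a) (opp b).
Proof.
move=> ha hb; symmetry; apply: opp_uniq; try brace_mem.
by rewrite addACA ?addaN ?add1 //; brace_mem.
Qed.
Lemma subr1_eq a b : a \in G -> b \in G -> add a (opp b) = 1 -> a = b.
Proof. by move=> ha hb /opp_uniq e; rewrite -(oppK ha) -e ?oppK //; brace_mem. Qed.

Lemma compD a b c : a \in G -> b \in G -> c \in G ->
  bcomp a (add b c) = add (add (bcomp a b) (bcomp a c)) (opp a).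
Proof. by move=> ha hb hc; rewrite -brace_compat ?addrK //; brace_mem. Qed.

Lemma compE a b : a \in G -> b \in G -> bcomp a b = add a (lam a b).
Proof. by move=> ha hb; rewrite /blambda addNK //; brace_mem. Qed.

Lemma lam1 a : a \in G -> lam a 1 = 1.
Proof. by move=> ha; rewrite /blambda /bcomp mul1g addNa. Qed.
Lemma lam1l b : b \in G -> lam 1 b = b.
Proof. by move=> hb; rewrite /blambda /bcomp mulg1 opp1 add1. Qed.
Lemma lamD a b c : a \in G -> b \in G -> c \in G ->
  lam a (add b c) = add (lam a b) (lam a c).
Proof.
move=> ha hb hc; rewrite /blambda compD // addACA; try brace_mem.
rewrite (addC _ (oppG ha)); try brace_mem.
by rewrite addA //; brace_mem.
Qed.
Lemma lamN a b : a \in G -> b \in G -> lam a (opp b) = opp (lam a b).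
Proof.
by move=> ha hb; apply: opp_uniq; rewrite -?lamD ?addaN ?lam1 //; brace_mem.
Qed.
Lemma lamM a b c : a \in G -> b \in G -> c \in G ->
  lam (bcomp a b) c = lam a (lam b c).
Proof.
move=> ha hb hc; rewrite [lam b c]/blambda lamD ?lamN //; try brace_mem.
rewrite [lam a b]/blambda oppD ?oppK /blambda; try brace_mem.
have -> : bcomp a (bcomp b c) = bcomp (bcomp a b) c by rewrite /bcomp mulgA.
by rewrite addACA ?addaN ?add1 //; brace_mem.
Qed.
Lemma lamV a b : a \in G -> b \in G -> lam a^-1 (lam a b) = b.
Proof. by move=> ha hb; rewrite -lamM /bcomp ?mulgV ?lam1l //; try brace_mem. Qed.
Lemma lamVr a b : a \in G -> b \in G -> lam a (lam a^-1 b) = b.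
Proof. by move=> ha hb; rewrite -lamM /bcomp ?mulVg ?lam1l //; try brace_mem. Qed.
Lemma lam_inj a b c : a \in G -> b \in G -> c \in G -> lam a b = lam a c -> b = c.
Proof. by move=> ha hb hc e; rewrite -(lamV ha hb) e lamV. Qed.

Lemma starM a x y : a \in G -> x \in G -> y \in G ->
  star a (bcomp x y) = add (add (star a x) (star (bcomp a x) y)) (opp (star x y)).
Proof.
move=> ha hx hy; rewrite /bstar (compE hx hy) lamD ?lamM ?oppD; try brace_mem.
rewrite addACA ?oppD ?oppK; try brace_mem.
rewrite -[RHS]addA; try brace_mem.
by congr add; rewrite addACA ?addNa ?addr1 //; brace_mem.
Qed.

Lemma lam_star c a b : c \in G -> a \in G -> b \in G ->
  lam c (star a b) = add (star (bcomp c a) b) (opp (star c b)).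
Proof.
move=> hc ha hb; rewrite /bstar lamD ?lamN ?lamM ?oppD ?oppK; try brace_mem.
by rewrite addACA ?addNa ?addr1 //; brace_mem.
Qed.

Section Ideal.
Variable J : {set gT}.
Hypothesis HJ : is_ideal add opp G J.

Lemma idealG j : j \in J -> j \in G.
Proof. by case: HJ => _ [/andP [sJG _] _] hj; apply: (subsetP sJG). Qed.
Lemma ideal1 : (1 : gT) \in J.
Proof. by case: HJ => /andP [h _] _. Qed.
Lemma ideal_lam a j : a \in G -> j \in J -> lam a j \in J.
Proof. by case: HJ => _ [_ H]; apply: H. Qed.
Lemma ideal_conj j b : j \in J -> b \in G -> j ^ b \in J.
Proof.
by case: HJ => _ [/andP [_ nJG] _] hj hb; rewrite memJ_norm // (subsetP nJG).
Qed.

(* An ideal is also an additive subgroup: -j = lambda_j(j^-1) and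
   j + k = j o lambda_j^-1(k). *)
Lemma ideal_opp j : j \in J -> opp j \in J.
Proof.
case: HJ => gs _ hj; have hjG := idealG hj.
have -> : opp j = lam j j^-1 by rewrite /blambda /bcomp mulVg addr1 //; brace_mem.
by rewrite ideal_lam // (@groupV _ (Group gs)).
Qed.
Lemma ideal_add j k : j \in J -> k \in J -> add j k \in J.
Proof.
case: HJ => gs _ hj hk; have hjG := idealG hj; have hkG := idealG hk.
have -> : add j k = bcomp j (lam j^-1 k) by rewrite compE ?lamVr //; brace_mem.
by rewrite /bcomp (@groupM _ (Group gs)) // ideal_lam ?invG.
Qed.

Definition cong a b := add a (opp b) \in J.

Lemma cong_refl a : a \in G -> cong a a.
Proof. by move=> ha; rewrite /cong addaN // ideal1. Qed.
Lemma cong_sym a b : a \in G -> b \in G -> cong a b -> cong b a.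
Proof.
move=> ha hb /ideal_opp; rewrite oppD ?oppK; try brace_mem.
by rewrite addC //; try brace_mem.
Qed.
Lemma cong_trans a b c : a \in G -> b \in G -> c \in G ->
  cong a b -> cong b c -> cong a c.
Proof.
by move=> ha hb hc h1 h2; have := ideal_add h1 h2; rewrite -addA ?addKl //; brace_mem.
Qed.
Lemma cong_add a a' b b' : a \in G -> a' \in G -> b \in G -> b' \in G ->
  cong a a' -> cong b b' -> cong (add a b) (add a' b').
Proof.
move=> ha ha' hb hb' h1 h2.
rewrite /cong oppD; try brace_mem.
rewrite addACA; try brace_mem.
exact: ideal_add.
Qed.

Lemma cong_bcomp a b : a \in G -> b \in G -> cong a b ->
  exists2 j, j \in J & a = bcomp b j.
Proof.
move=> ha hb h; exists (lam b^-1 (add a (opp b))); first by rewrite ideal_lam ?invG.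
rewrite compE ?lamVr; try brace_mem.
by rewrite addCA ?addaN ?addr1 //; brace_mem.
Qed.
Lemma cong_coset a b : a \in G -> b \in G -> cong a b -> J :* a = J :* b.
Proof.
move=> ha hb h; have [j hj ->] := cong_bcomp ha hb h.
by case: HJ => gs _; rewrite /bcomp rcosetM (@rcoset_id _ (Group gs)).
Qed.

Lemma cong_lamr a b b' : a \in G -> b \in G -> b' \in G -> cong b b' ->
  cong (lam a b) (lam a b').
Proof. by move=> ha hb hb' h; rewrite /cong -lamN -?lamD ?ideal_lam //; brace_mem. Qed.

(* lambda_j acts trivially modulo J when j lies in J, since J is normal. *)
Lemma lam_ideal_cong j b : j \in J -> b \in G -> cong (lam j b) b.
Proof.
move=> hj hb; have hjG := idealG hj.
have hj' : j ^ b^-1 \in J by rewrite ideal_conj ?invG.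
have hj'G := idealG hj'.
have e : bcomp j b = bcomp b (j ^ b^-1).
  by rewrite /bcomp conjgE invgK !mulgA mulgKV.
rewrite /cong /blambda e compE // -addA; try brace_mem.
rewrite (addC hb) ?addrK; try brace_mem.
by rewrite ideal_add ?ideal_opp ?ideal_lam.
Qed.

(* Congruent elements act congruently, since a' = a o j with j in J. *)
Lemma cong_laml a a' b : a \in G -> a' \in G -> b \in G -> cong a' a ->
  cong (lam a' b) (lam a b).
Proof.
move=> ha ha' hb h; have [j hj ->] := cong_bcomp ha' ha h.
have hjG := idealG hj.
by rewrite lamM // cong_lamr ?lam_ideal_cong //; brace_mem.
Qed.

Lemma cong_lam a a' b b' : a \in G -> a' \in G -> b \in G -> b' \in G ->
  cong a a' -> cong b b' -> cong (lam a b) (lam a' b').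
Proof.
move=> ha ha' hb hb' h1 h2.
apply: (@cong_trans _ (lam a b')); try brace_mem; first exact: cong_lamr.
by apply: cong_laml => //; apply: cong_sym.
Qed.

Lemma cong_lam_cancel a b b' : a \in G -> b \in G -> b' \in G ->
  cong (lam a b) (lam a b') -> cong b b'.
Proof.
move=> ha hb hb' h; have := cong_lamr (invG ha) _ _ h.
by rewrite !lamV //; apply; brace_mem.
Qed.

Lemma cong_comp_add a b : {in G &, forall x y, star x y \in J} ->
  a \in G -> b \in G -> cong (bcomp a b) (add a b).
Proof.
move=> hstar ha hb; rewrite /cong compE // oppD; try brace_mem.
rewrite addACA ?addaN ?add1; try brace_mem.
exact: hstar.
Qed.

End Ideal.

Lemma ideal_nontrivial J : is_ideal add opp G J -> J != [1 gT] ->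
  exists2 j, j \in J & j != 1.
Proof. by case=> gs _; apply: (@trivgPn _ (Group gs)). Qed.

Lemma bnmulG n a : a \in G -> bnmul add n a \in G.
Proof. by move=> ha; elim: n => [|n IH]; [exact: oneG | exact: addG]. Qed.
Lemma bnmulD n m a : a \in G ->
  bnmul add (n + m) a = add (bnmul add n a) (bnmul add m a).
Proof.
move=> ha; elim: n => [|n IH]; first by rewrite add0n {2}/bnmul /= add1 ?bnmulG.
by rewrite addSn /bnmul !iterS -!/(bnmul add _ a) IH addA ?bnmulG.
Qed.

Section AdditiveSpan.
Variable S : {set gT}.
Hypothesis sSG : S \subset G.

Local Notation span := (in_add_span add opp S).

Lemma span1 : span 1.
Proof. by move=> A h1. Qed.
Lemma span_add u v : span u -> span v -> span (add u v).
Proof. by move=> hu hv A h1 hA hN hS; apply: (hA); [exact: hu | exact: hv]. Qed.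
Lemma span_opp u : span u -> span (opp u).
Proof. by move=> hu A h1 hA hN hS; apply: (hN); exact: hu. Qed.
Lemma span_sub u : u \in S -> span u.
Proof. by move=> hu A h1 hA hN hS; apply: (subsetP hS). Qed.
Lemma spanG u : span u -> u \in G.
Proof. by apply; [exact: oneG | exact: addG | exact: oppG | exact: sSG]. Qed.

(* The span as a finite set, so that it can be compared with ideals. *)
Definition span_set : {set gT} := [set z in G | `[< span z >]].

Lemma mem_span_set z : z \in span_set <-> span z.
Proof.
rewrite inE; split => [/andP [_ /asboolP] //|h].
by rewrite (spanG h) /=; apply/asboolP.
Qed.

Lemma span_lam c z : c \in G ->
  (forall w, w \in S -> span (lam c w)) -> span z -> span (lam c z).
Proof.
move=> hc hS hz; pose A := [set w in G | `[< span (lam c w) >]].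
have memA w : w \in A <-> w \in G /\ span (lam c w).
  by rewrite inE; split => [/andP [? /asboolP] //|[-> /asboolP]].
suff /memA [] : z \in A by [].
apply: hz.
- by apply/memA; rewrite lam1 //; split; [exact: oneG | exact: span1].
- move=> u v /memA [hu su] /memA [hv sv]; apply/memA.
  by rewrite lamD //; split; [exact: addG | exact: span_add].
- move=> u /memA [hu su]; apply/memA.
  by rewrite lamN //; split; [exact: oppG | exact: span_opp].
- by apply/subsetP => w hw; apply/memA; split; [exact: (subsetP sSG) | exact: hS].
Qed.

End AdditiveSpan.

(* An additive subgroup L of G that is lambda-invariant and contains all
   the a * b is an ideal: it is closed under o as k o j = k + lambda_k(j),
   and normal since a conjugate w = k^c of k satisfies
   w = lambda_c(k) - w * c. *)
Lemma additive_ideal (L : {set gT}) :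
  L \subset G -> (1 : gT) \in L ->
  {in L &, forall a b, add a b \in L} -> {in L, forall a, opp a \in L} ->
  {in G & L, forall a x, lam a x \in L} ->
  {in G &, forall a b, star a b \in L} -> is_ideal add opp G L.
Proof.
move=> sLG h1 hadd hopp hlam hstar.
have inG x : x \in L -> x \in G by apply: (subsetP sLG).
have gs : group_set L.
  apply/andP; split=> //; apply/subsetP => _ /mulsgP [j k hj hk ->].
  by rewrite -[j * k]/(bcomp k j) compE ?inG // hadd // hlam ?inG.
split=> //; split=> //; apply/andP; split=> //.
apply/normsP => c hc; apply/eqP; rewrite eqEcard cardJg leqnn andbT.
apply/subsetP => _ /imsetP [k hk ->].
have hkG := inG _ hk; set w := k ^ c.
have hw : w \in G by rewrite /w groupJ.
have e : add w (lam w c) = add c (lam c k).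
  by rewrite -!compE // /bcomp /w conjgE !mulgA mulgV mul1g.
have -> : w = add (lam c k) (opp (star w c)).
  apply: (@addIl (lam w c)); try brace_mem.
  rewrite /bstar oppD ?oppK; try brace_mem.
  rewrite addCA; try brace_mem.
  rewrite addNK; try brace_mem.
  by rewrite addC ?e 1?addC; try brace_mem.
by rewrite hadd ?hopp ?hstar ?hlam.
Qed.

(* A minimal nonzero ideal I is the additive span of any S <= I containing a
   nonzero element, provided span S is lambda-invariant and contains all
   a * b: indeed span S is then a nonzero ideal contained in I. *)
Lemma minimal_ideal_span (I S : {set gT}) :
  minimal_nonzero_ideal add opp G I -> S \subset I ->
  (forall c z, c \in G -> z \in S -> in_add_span add opp S (lam c z)) ->
  {in G &, forall a b, in_add_span add opp S (star a b)} ->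
  (exists2 z, z \in S & z != 1) ->
  forall z, z \in I <-> in_add_span add opp S z.
Proof.
move=> [HI [_ Hmin]] sSI hlam hstar [z0 hz0 nz0].
have sSG : S \subset G by apply/subsetP => z /(subsetP sSI) /(idealG HI).
have memK := mem_span_set sSG.
have HK : is_ideal add opp G (span_set S).
  apply: additive_ideal.
  - by apply/subsetP => z /memK; apply: spanG.
  - by apply/memK; apply: span1.
  - by move=> u v /memK hu /memK hv; apply/memK; apply: span_add.
  - by move=> u /memK hu; apply/memK; apply: span_opp.
  - move=> c z hc /memK hz; apply/memK.
    by apply: span_lam => // w; apply: hlam.
  - by move=> a b ha hb; apply/memK; apply: hstar.
have sKI : span_set S \subset I.
  apply/subsetP => z /memK; apply.
  - exact: ideal1 HI.
  - exact: ideal_add HI.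
  - exact: ideal_opp HI.
  - exact: sSI.
case: (Hmin _ HK sKI) => [eK | <- z]; last exact: memK.
have : z0 \in span_set S by apply/memK; apply: span_sub.
by rewrite eK inE (negbTE nz0).
Qed.

End BraceAlgebra.

#[global] Hint Extern 1 (is_true (_ \in _)) => apply: addG : brace_mem.
#[global] Hint Extern 1 (is_true (_ \in _)) => apply: oppG : brace_mem.
#[global] Hint Extern 1 (is_true (_ \in _)) => apply: bcompG : brace_mem.
#[global] Hint Extern 1 (is_true (_ \in _)) => apply: lamG : brace_mem.
#[global] Hint Extern 1 (is_true (_ \in _)) => apply: starG : brace_mem.
#[global] Hint Extern 1 (is_true (_ \in _)) => apply: invG : brace_mem.
#[global] Hint Extern 1 (is_true (_ \in _)) => apply: oneG : brace_mem.

Lemma fin_surj_bij (T : finType) (f : T -> T) :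
  (forall y, exists x, f x = y) -> bijective f.
Proof.
move=> hs; pose h y := odflt y [pick x | f x == y].
have hK : cancel h f.
  move=> y; rewrite /h; case: pickP => [x /eqP //|n].
  by have [x hx] := hs y; have := n x; rewrite hx eqxx.
have [h' hh' hh'K] := injF_bij (can_inj hK).
have fE x : f x = h' x by rewrite -{1}(hh'K x) hK.
by exists h => // x; rewrite fE hh'K.
Qed.

Lemma image_solution (X Y : finType) (s g : X -> X -> X) (sY gY : Y -> Y -> Y)
    (f : X -> Y) :
  is_solution s g -> (forall y, exists x, f x = y) ->
  (forall x y, f (s x y) = sY (f x) (f y)) ->
  (forall x y, f (g x y) = gY (f x) (f y)) ->
  is_solution sY gY.
Proof.
move=> [[x0] [Hbs [Hbg [Hinv Hybe]]]] fsurj fs fg.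
have bij_image (t : X -> X -> X) (tY : Y -> Y -> Y) a :
    (forall x, bijective (t x)) -> (forall x y, f (t x y) = tY (f x) (f y)) ->
    bijective (tY a).
  move=> Hbt ft; apply: fin_surj_bij => z.
  have [a' <-] := fsurj a; have [z' <-] := fsurj z.
  have [h _ hK] := Hbt a'.
  by exists (f (h z')); rewrite -ft hK.
pose ft (q : X * X * X) := (f q.1.1, f q.1.2, f q.2).
have hr x y : ybe_r sY gY (f x, f y) = (f (s x y), f (g y x)).
  by rewrite /ybe_r /= fs fg.
have h12 q : ybe_r12 (ybe_r sY gY) (ft q) = ft (ybe_r12 (ybe_r s g) q).
  by rewrite /ybe_r12 /ft /= fs fg.
have h23 q : ybe_r23 (ybe_r sY gY) (ft q) = ft (ybe_r23 (ybe_r s g) q).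
  by rewrite /ybe_r23 /ft /= fs fg.
split; first exact: (inhabits (f x0)).
split; first by move=> a; apply: (bij_image s).
split; first by move=> a; apply: (bij_image g).
split.
  move=> [a b]; have [a' <-] := fsurj a; have [b' <-] := fsurj b.
  by rewrite !hr; have := Hinv (a', b'); rewrite /ybe_r /= => -[-> ->].
move=> [[a b] c].
have [a' <-] := fsurj a; have [b' <-] := fsurj b; have [c' <-] := fsurj c.
have -> : (f a', f b', f c') = ft (a', b', c') by [].
by rewrite h12 h23 h12 Hybe h23 h12 h23.
Qed.

(* In a simple solution, an equivalence relation compatible with sigma and
   gamma is either equality or the total relation: otherwise its quotient
   would be a proper nontrivial image of the solution. *)
Lemma simple_congruence (X : finType) (s g : X -> X -> X) (R : rel X) :
  simple_solution s g ->
  (forall x, R x x) -> (forall x y, R x y -> R y x) ->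
  (forall x y z, R x y -> R y z -> R x z) ->
  (forall x x' y y', R x x' -> R y y' -> R (s x y) (s x' y')) ->
  (forall x x' y y', R x x' -> R y y' -> R (g x y) (g x' y')) ->
  (forall x y, R x y -> x = y) \/ (forall x y, R x y).
Proof.
move=> [Hsol [_ Hsimp]] Rr Rs Rt Cs Cg.
pose rep x := odflt x [pick z | R x z].
have repR x : R x (rep x) by rewrite /rep; case: pickP => [z //|n] /=.
have rep_eq x y : R x y -> rep x = rep y.
  move=> hxy; rewrite /rep.
  have -> : [pick z | R x z] = [pick z | R y z].
    by apply: eq_pick => z; apply/idP/idP => h; [apply: Rt (Rs _ _ hxy) h | apply: Rt hxy h].
  by case: pickP => [z //|n] /=; have := n y; rewrite Rr.
have rep_rep x : rep (rep x) = rep x by symmetry; apply: rep_eq; apply: repR.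
pose Y := {x : X | rep x == x}.
pose f (x : X) : Y := exist _ (rep x) (introT eqP (rep_rep x)).
have fR x y : R x y -> f x = f y by move=> h; apply: val_inj; apply: rep_eq.
have fval (y : Y) : f (val y) = y by apply: val_inj => /=; apply/eqP; apply: (valP y).
pose sY (a b : Y) := f (s (val a) (val b)).
pose gY (a b : Y) := f (g (val a) (val b)).
have fsurj y : exists x, f x = y by exists (val y).
have fs x y : f (s x y) = sY (f x) (f y) by apply: fR; apply: Cs; apply: repR.
have fg x y : f (g x y) = gY (f x) (f y) by apply: fR; apply: Cg; apply: repR.
have solY := image_solution Hsol fsurj fs fg.
case: (Hsimp Y sY gY f solY fs fsurj) => [inj | cst]; [left | right].
  by move=> x y h; apply: inj; apply: fR.
move=> x y; apply: Rt (repR x) _.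
by have /(congr1 val) /= -> := cst x y; apply: Rs; apply: repR.
Qed.

Lemma cycle_commute (T : finType) (p a c : {perm T}) :
  a \in <[p]> -> c \in <[p]> -> commute a c.
Proof. by case/cycleP=> i -> /cycleP [j ->]; apply: commuteX2. Qed.

Lemma transitive_cycle_order (T : finType) (x0 : T) (q : {perm T}) :
  (forall x y, exists2 a, a \in <[q]> & a x = y) -> #[q] = #|T|.
Proof.
move=> htr; pose at_x0 (a : {perm T}) := a x0.
have im : at_x0 @: <[q]> = [set: T].
  by apply/setP => y; rewrite in_setT; apply/imsetP; have [a ha <-] := htr x0 y; exists a.
rewrite /order -cardsT -im card_in_imset // => a b ha hb e; apply/permP => y.
have [c hc <-] := htr x0 y.
by rewrite -!permM (cycle_commute hc ha) (cycle_commute hc hb) !permM [a x0]e.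
Qed.

Section ConstantSigma.
Variables (X : finType) (s g : X -> {perm X}) (p : {perm X}).
Hypothesis Hs : simple_solution (fun x y => s x y) (fun x y => g x y).
Hypothesis Hnp : ~~ prime #|X|.
Hypothesis s_const : forall x, s x = p.

(* Involutivity forces gamma_y = p^-1 for every y. *)
Lemma const_gamma a b : g a b = p^-1 b.
Proof.
case: Hs => [[_ [_ [_ [Hinv _]]]] _].
have := congr1 fst (Hinv (b, a)); rewrite /ybe_r /= !s_const => e.
by rewrite -{2}e permK.
Qed.

Lemma cycle_invariant_dichotomy (R : rel X) :
  (forall x, R x x) -> (forall x y, R x y -> R y x) ->
  (forall x y z, R x y -> R y z -> R x z) ->
  (forall h x y, h \in <[p]> -> R x y -> R (h x) (h y)) ->
  (forall x y, R x y -> x = y) \/ (forall x y, R x y).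
Proof.
move=> Rr Rs Rt Rh; apply: (simple_congruence Hs) => //.
- by move=> x x' y y' _ hy; rewrite !s_const; apply: Rh => //; apply: cycle_id.
- move=> x x' y y' _ hy; rewrite !const_gamma.
  by apply: Rh => //; rewrite groupV cycle_id.
Qed.

(* Hence every q in <[p]> is the identity or generates a transitive group:
   the orbits of <[q]> form a <[p]>-invariant partition, <[p]> being abelian. *)
Lemma cycle_orbits q : q \in <[p]> ->
  (forall x, q x = x) \/ (forall x y, exists2 a, a \in <[q]> & a x = y).
Proof.
move=> hq; have sq : <[q]> \subset <[p]> by rewrite cycle_subG.
pose R x y := [exists a in <[q]>, a x == y].
have RP x y : reflect (exists2 a, a \in <[q]> & a x = y) (R x y).
  by apply: (iffP existsP) => [[a /andP [ha /eqP e]]|[a ha e]]; exists a => //;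
    rewrite ha e eqxx.
case: (@cycle_invariant_dichotomy R).
- by move=> x; apply/RP; exists 1 => //; rewrite perm1.
- by move=> x y /RP [a ha <-]; apply/RP; exists a^-1; rewrite ?groupV ?permK.
- move=> x y z /RP [a ha <-] /RP [b hb <-]; apply/RP.
  by exists (a * b); rewrite ?groupM ?permM.
- move=> h y y' hh /RP [a ha <-]; apply/RP; exists a => //.
  by rewrite -!permM (cycle_commute hh (subsetP sq _ ha)).
- by move=> h; left=> x; symmetry; apply: h; apply/RP; exists q => //; apply: cycle_id.
- by move=> h; right=> x y; apply/RP; apply: h.
Qed.

(* 2 is prime, so |X| > 2. *)
Lemma const_card_gt2 : 2 < #|X|.
Proof.
case: Hs => _ [H1 _]; rewrite ltn_neqAle H1 andbT.
by apply: contra Hnp => /eqP <-.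
Qed.

(* p = 1 would make every equivalence relation compatible; the partition
   {x0}, X \ {x0} is neither trivial nor total as |X| > 2. *)
Lemma const_sigma_neq1 : p != 1.
Proof.
apply/eqP => p1.
have [[[x0] _] _] := Hs.
have : 1 < #|[set: X] :\ x0|.
  have := cardsD1 x0 [set: X]; rewrite in_setT cardsT add1n => e.
  by rewrite -ltnS -e const_card_gt2.
case/card_gt1P => y [z []]; rewrite !inE !andbT => hy hz yz.
pose R x y := (x == x0) == (y == x0).
case: (@cycle_invariant_dichotomy R).
- by move=> x; rewrite /R eqxx.
- by move=> u v; rewrite /R eq_sym.
- by move=> u v w; rewrite /R => /eqP -> /eqP ->.
- by move=> h u v; rewrite p1 cycle1 => /set1P ->; rewrite !perm1.
- by move=> h; move/eqP: yz; apply; apply: h; rewrite /R (negbTE hy) (negbTE hz).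
- by move=> h; have := h x0 y; rewrite /R eqxx (negbTE hy).
Qed.

(* <[p]> is transitive as p != 1, so #[p] = n := |X|.  For r the least
   prime divisor of n, r < n since n is not prime; then p^r is neither the
   identity (r < #[p]) nor transitive (#[p^r] = n / r < n). *)
Lemma const_sigma_absurd : False.
Proof.
have n_gt2 := const_card_gt2; set n := #|X| in n_gt2 *.
have [[[x0] _] _] := Hs.
have [hfix | htr] := cycle_orbits (cycle_id p).
  by move/eqP: const_sigma_neq1; apply; apply/permP => x; rewrite hfix perm1.
have ordp : #[p] = n := transitive_cycle_order x0 htr.
set r := pdiv n.
have pr : prime r by apply: pdiv_prime; rewrite ltnW.
have rltn : r < n.
  rewrite ltn_neqAle dvdn_leq ?pdiv_dvd 1?ltnW 1?ltnW // andbT.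
  by apply: contraNneq Hnp => e; rewrite -/n -e.
have [hfix | htr'] := cycle_orbits (mem_cycle p r).
  have : p ^+ r = 1 by apply/permP => x; rewrite hfix perm1.
  move/eqP; rewrite -order_dvdn ordp => /dvdn_leq.
  by rewrite prime_gt0 // => /(_ isT); rewrite leqNgt rltn.
have := transitive_cycle_order x0 htr'.
rewrite orderXdiv ordp ?pdiv_dvd // -/n => /eqP.
by rewrite ltn_eqF // ltn_Pdiv ?prime_gt1 // ltnW // ltnW.
Qed.

End ConstantSigma.

Section NaturalBrace.
Variables (X : finType) (s g : X -> {perm X}).
Variables (add : {perm X} -> {perm X} -> {perm X}) (opp : {perm X} -> {perm X}).
Hypothesis Hsimp : simple_solution (fun x y => s x y) (fun x y => g x y).
Hypothesis Hnat : natural_brace s add opp.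

Local Notation G := (permGroup s).
Local Notation lam := (blambda add opp).
Local Notation star := (bstar add opp).

Let HB : left_brace_on add opp G := Hnat.1.

Lemma sigma_mem x : s x \in G.
Proof. by rewrite /permGroup mem_gen // imset_f. Qed.

Local Hint Resolve HB sigma_mem : brace_mem.

Lemma sigma_ind (P : {perm X} -> Prop) :
  P 1 -> {in G &, forall a b, P a -> P b -> P (a * b)} -> (forall x, P (s x)) ->
  {in G, forall a, P a}.
Proof.
move=> P1 PM Ps; pose H := [set a in G | `[< P a >]].
have memH a : a \in H <-> a \in G /\ P a.
  by rewrite inE; split => [/andP [? /asboolP] //|[-> /asboolP]].
have gsH : group_set H.
  apply/andP; split; first by apply/memH; split; [exact: group1 | exact: P1].
  apply/subsetP => _ /mulsgP [a b /memH [ha Pa] /memH [hb Pb] ->].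
  by apply/memH; split; [rewrite groupM | apply: PM].
have sGH : G \subset H.
  rewrite -[H]/(gval (Group gsH)) gen_subG.
  by apply/subsetP => _ /imsetP [x _ ->]; apply/memH; split; [exact: sigma_mem | exact: Ps].
by move=> a /(subsetP sGH) /memH [].
Qed.

(* lambda_a(sigma_x) = sigma_{a(x)}: true for a = sigma_y by definition of the
   natural brace, and stable under o. *)
Lemma lam_sigma a x : a \in G -> lam a (s x) = s (a x).
Proof.
move=> ha; move: a ha x; apply: sigma_ind.
- by move=> x; rewrite (lam1l HB) ?perm1 //; brace_mem.
- move=> a b ha hb Ha Hb x.
  by rewrite -[a * b]/(bcomp b a) (lamM HB) ?Ha ?Hb ?permM //; brace_mem.
- by move=> y x; rewrite Hnat.2.
Qed.

Lemma sigma_gamma x y : s (s x y) (g y x) = x.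
Proof. by case: Hsimp => [[_ [_ [_ [Hinv _]]]] _]; exact: (congr1 fst (Hinv (x, y))). Qed.

(* x |-> sigma_x is injective or constant, since its kernel relation is a
   congruence of the solution. *)
Lemma sigma_inj_or_const :
  (forall x y, s x = s y -> x = y) \/ (forall x y, s x = s y).
Proof.
pose R x y := s x == s y.
case: (@simple_congruence _ _ _ R Hsimp).
- by move=> x; rewrite /R.
- by move=> x y; rewrite /R eq_sym.
- by move=> x y z; rewrite /R => /eqP -> /eqP ->.
- by move=> x x' y y'; rewrite /R => /eqP h1 /eqP h2; rewrite -!Hnat.2 h1 h2.
- move=> x x' y y'; rewrite /R => /eqP h1 /eqP h2; apply/eqP.
  have ec : s (s y x) = s (s y' x') by rewrite -!Hnat.2 h1 h2.
  apply: (@lam_inj _ _ _ _ HB (s (s y x))); try brace_mem.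
  by rewrite !lam_sigma; try brace_mem; rewrite sigma_gamma ec sigma_gamma h2.
- by move=> h; left=> x y e; apply: h; rewrite /R e.
- by move=> h; right=> x y; apply/eqP; apply: h.
Qed.

(* Every a * b lies in any additive subgroup L containing all sigma_x - sigma_y:
   for b = sigma_y, a * sigma_y = sigma_{a(y)} - sigma_y, and b |-> a * b
   satisfies the cocycle identity starM. *)
Lemma stars_in_sigma_span (L : {set {perm X}}) : (1 : {perm X}) \in L ->
  {in L &, forall a b, add a b \in L} -> {in L, forall a, opp a \in L} ->
  (forall x y, add (s x) (opp (s y)) \in L) ->
  {in G &, forall a b, star a b \in L}.
Proof.
move=> h1 hadd hopp hdiff a b ha hb; move: b hb a ha; apply: sigma_ind.
- by move=> a ha; rewrite /bstar (lam1 HB) // (opp1 HB) (add1 HB) //; brace_mem.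
- move=> b c hb hc Hb Hc a ha; rewrite -[b * c]/(bcomp c b) (starM HB) //.
  apply: (hadd); last by apply: (hopp); apply: Hb.
  by apply: (hadd); [apply: Hc | apply: Hb; brace_mem].
- by move=> y a ha; rewrite /bstar lam_sigma.
Qed.

Section IdealCongruence.
Variable J : {set {perm X}}.
Hypothesis HJ : is_ideal add opp G J.

Local Notation congJ := (cong add opp J).

Lemma cong_sigma_s x x' y y' : congJ (s x) (s x') -> congJ (s y) (s y') ->
  congJ (s (s x y)) (s (s x' y')).
Proof. by move=> h1 h2; rewrite -!Hnat.2; apply: (cong_lam HB HJ) => //; brace_mem. Qed.

Lemma cong_sigma_g x x' y y' : congJ (s x) (s x') -> congJ (s y) (s y') ->
  congJ (s (g x y)) (s (g x' y')).
Proof.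
move=> h1 h2; have hc := cong_sigma_s h2 h1.
have k1 : congJ (lam (s (s y x)) (s (g x y))) (lam (s (s y' x')) (s (g x' y'))).
  by rewrite !lam_sigma ?sigma_gamma //; brace_mem.
have k2 : congJ (lam (s (s y' x')) (s (g x' y'))) (lam (s (s y x)) (s (g x' y'))).
  by apply: (cong_laml HB HJ); try brace_mem; apply: (cong_sym HB HJ); try brace_mem.
apply: (cong_lam_cancel HB HJ (sigma_mem (s y x))); try brace_mem.
by apply: (cong_trans HB HJ _ _ _ k1 k2); brace_mem.
Qed.

(* A nonzero ideal contains every sigma_x - sigma_y: the congruence it
   induces on X is not equality, since lambda_j(sigma_x) = sigma_{j(x)} is
   congruent to sigma_x for j in J. *)
Lemma ideal_sigma_diff x y : J != [1 {perm X}] -> add (s x) (opp (s y)) \in J.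
Proof.
move=> nJ; pose R u v := congJ (s u) (s v).
case: (@simple_congruence _ _ _ R Hsimp).
- by move=> z; apply: (cong_refl HB HJ); brace_mem.
- by move=> z w; apply: (cong_sym HB HJ); brace_mem.
- by move=> z w v; apply: (cong_trans HB HJ); brace_mem.
- exact: cong_sigma_s.
- exact: cong_sigma_g.
- move=> hid; have [j hj nj1] := ideal_nontrivial HJ nJ.
  have [z jz] : exists z, j z != z.
    case: (pickP (fun z => j z != z)) => [z jz | fix_j]; first by exists z.
    case/eqP: nj1; apply/permP => z; rewrite perm1.
    by have /negbFE/eqP := fix_j z.
  suff e : j z = z by move: jz; rewrite e eqxx.
  apply: hid; rewrite /R -lam_sigma; last exact: (idealG HJ hj).
  exact: (lam_ideal_cong HB HJ hj (sigma_mem z)).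
- by move=> htot; apply: htot.
Qed.

End IdealCongruence.

Variable I : {set {perm X}}.
Hypothesis Hmin : minimal_nonzero_ideal add opp G I.

Let HI : is_ideal add opp G I := Hmin.1.

Local Notation congI := (cong add opp I).

Lemma ideal_nonzero : I != [1 {perm X}].
Proof. by case: Hmin => _ []. Qed.

Lemma star_in_ideal a b : a \in G -> b \in G -> star a b \in I.
Proof.
apply: stars_in_sigma_span.
- exact: (ideal1 HI).
- exact: (ideal_add HB HI).
- exact: (ideal_opp HB HI).
- by move=> x y; apply: ideal_sigma_diff; [exact: HI | exact: ideal_nonzero].
Qed.

Lemma quotient_trivial :
  {in G &, forall a b, I :* bcomp a b = I :* add a b}.
Proof.
move=> a b ha hb; apply: (cong_coset HB HI); try brace_mem.
exact: (cong_comp_add HB star_in_ideal ha hb).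
Qed.

(* The additive group of G/I is cyclic, generated by the class of any sigma_x:
   all sigma_y are congruent to it, and they generate G. *)
Lemma quotient_cyclic x0 :
  {in G, forall a, exists n, I :* a = I :* bnmul add n (s x0)}.
Proof.
have hc := sigma_mem x0.
suff cyc : {in G, forall a, exists n, congI a (bnmul add n (s x0))}.
  move=> a ha; have [n hn] := cyc a ha.
  by exists n; apply: (cong_coset HB HI) => //; apply: (bnmulG HB).
apply: sigma_ind.
- by exists 0; apply: (cong_refl HB HI); brace_mem.
- move=> a b ha hb [n hn] [m hm]; exists (m + n).
  have hcn := bnmulG HB n hc; have hcm := bnmulG HB m hc.
  rewrite (bnmulD HB) //.
  apply: (cong_trans HB HI _ _ _ (cong_comp_add HB star_in_ideal hb ha)); try brace_mem.
  exact: (cong_add HB HI).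
- move=> x; exists 1%N; rewrite /bnmul /= (addr1 HB) //.
  by apply: ideal_sigma_diff; [exact: HI | exact: ideal_nonzero].
Qed.

Hypothesis Hnp : ~~ prime #|X|.

(* As |X| is not prime, sigma is injective. *)
Lemma sigma_inj : injective s.
Proof.
case: sigma_inj_or_const => [// | s_const].
case: Hsimp => [[[x0] _] _].
by case: (const_sigma_absurd Hsimp Hnp (fun x => s_const x x0)).
Qed.

Lemma sigma_distinct : exists x1 x2, s x1 != s x2.
Proof.
case: Hsimp => _ [/card_gt1P [x1 [x2 [_ _ n12]]] _].
by exists x1, x2; apply: contra n12 => /eqP /sigma_inj ->.
Qed.

Lemma sigma_moves : exists x y, s x y != y.
Proof.
have [x1 [x2 n12]] := sigma_distinct.
have [x hx] : exists x, s x != 1.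
  case: (eqVneq (s x1) 1) => e1; last by exists x1.
  by exists x2; apply: contraNneq n12 => ->; rewrite e1.
case: (pickP (fun y => s x y != y)) => [y hy | fix_x]; first by exists x, y.
case/eqP: hx; apply/permP => y; rewrite perm1.
by have /negbFE/eqP := fix_x y.
Qed.

(* soc(G) = 0: if a o b = a + b for all b, then lambda_a is the identity, so
   sigma_{a(x)} = lambda_a(sigma_x) = sigma_x and a(x) = x. *)
Lemma socle_trivial a : a \in G ->
  {in G, forall b, bcomp a b = add a b} -> a = 1.
Proof.
move=> ha hsoc; apply/permP => x; rewrite perm1; apply: sigma_inj.
by rewrite -lam_sigma // /blambda hsoc ?(addKl HB) //; brace_mem.
Qed.

Lemma ideal_square z : z \in I <->
  in_add_span add opp [set star a b | a in G, b in G] z.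
Proof.
apply: (minimal_ideal_span HB Hmin).
- by apply/subsetP => _ /imset2P [a b ha hb ->]; apply: star_in_ideal.
- move=> c _ hc /imset2P [a b ha hb ->].
  rewrite (lam_star HB) //; apply: span_add; first apply: span_sub.
    by apply: imset2_f => //; brace_mem.
  by apply: span_opp; apply: span_sub; apply: imset2_f.
- by move=> a b ha hb; apply: span_sub; apply: imset2_f.
- have [x [y hxy]] := sigma_moves.
  exists (star (s x) (s y)); first by apply: imset2_f; apply: sigma_mem.
  rewrite /bstar Hnat.2; apply: contra hxy => /eqP e.
  by apply/eqP/sigma_inj; apply: (subr1_eq HB) e; apply: sigma_mem.
Qed.

Lemma ideal_sigma_diffs z : z \in I <->
  in_add_span add opp [set add (s x) (opp (s y)) | x : X, y : X] z.
Proof.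
set S := [set add (s x) (opp (s y)) | x : X, y : X].
have sSG : S \subset G by apply/subsetP => _ /imset2P [x y _ _ ->]; brace_mem.
have memK := mem_span_set HB sSG.
apply: (minimal_ideal_span HB Hmin).
- apply/subsetP => _ /imset2P [x y _ _ ->].
  by apply: ideal_sigma_diff; [exact: HI | exact: ideal_nonzero].
- move=> c _ hc /imset2P [x y _ _ ->].
  rewrite (lamD HB) ?(lamN HB) ?lam_sigma //; try brace_mem.
  by apply: span_sub; apply: imset2_f.
- move=> a b ha hb; apply/memK; apply: stars_in_sigma_span => //.
  + by apply/memK; apply: span1.
  + by move=> u v /memK hu /memK hv; apply/memK; apply: span_add.
  + by move=> u /memK hu; apply/memK; apply: span_opp.
  + by move=> x y; apply/memK; apply: span_sub; apply: imset2_f.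
- have [x1 [x2 n12]] := sigma_distinct.
  exists (add (s x1) (opp (s x2))); first by apply: imset2_f.
  by apply: contra n12 => /eqP e; apply/eqP; apply: (subr1_eq HB) e; apply: sigma_mem.
Qed.

End NaturalBrace.

Close Scope group_scope.

Theorem mainTheorem3 (X : finType) (s g : X -> {perm X})
    (add : {perm X} -> {perm X} -> {perm X}) (opp : {perm X} -> {perm X})
    (I : {set {perm X}}) :
  simple_solution (fun x y => s x y) (fun x y => g x y) ->
  ~~ prime #|X| ->
  natural_brace s add opp ->
  minimal_nonzero_ideal add opp (permGroup s) I ->
  [/\ (* G/I is a trivial left brace *)
      {in permGroup s &, forall a b, (I :* bcomp a b)%g = (I :* add a b)%g},
      (* the additive group of G/I is cyclic *)
      (exists2 c, c \in permGroup s & {in permGroup s, forall a, exists n : nat,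
          (I :* a)%g = (I :* bnmul add n c)%g \/ (I :* a)%g = (I :* opp (bnmul add n c))%g}),
      (* I = G^2 *)
      (forall z, z \in I <-> in_add_span add opp
         [set bstar add opp a b | a in permGroup s, b in permGroup s] z),
      (* I = < sigma_x - sigma_y | x, y in X >_+ *)
      (forall z, z \in I <-> in_add_span add opp
         [set add (s x) (opp (s y)) | x : X, y : X] z)
    & (* soc(G) = {0} *)
      (forall a, a \in permGroup s ->
         {in permGroup s, forall b, bcomp a b = add a b} -> a = 1%g)].
Proof.
move=> Hsimp Hnp Hnat Hmin.
have [[[x0] _] _] := Hsimp.
split.
- exact: (quotient_trivial Hsimp Hnat Hmin).
- exists (s x0); first exact: sigma_mem.
  by move=> a ha; have [n hn] := quotient_cyclic Hsimp Hnat Hmin x0 ha; exists n; left.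
- exact: (ideal_square Hsimp Hnat Hmin Hnp).
- exact: (ideal_sigma_diffs Hsimp Hnat Hmin Hnp).
- exact: (socle_trivial Hsimp Hnat Hnp).
Qed.
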